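(* Let $\alpha,\beta,r,x$ be real numbers and $\lambda$ a positive integer. For all nonnegative integers $n$, $$A_{n}^{\lambda,x}(\alpha,\beta,r)=\frac{(-1)^{n}}{\Gamma(\lambda)}\int_{0}^{\infty}z^{\lambda-1}S_{n}(-\beta xz;\alpha,-\beta,-r)\,e^{-z}\,dz,$$ where $\Gamma$ is the gamma function.
   Context: For a number $t$ and $\alpha$, the generalised factorial is $(t|\alpha)_n=\prod_{j=0}^{n-1}(t-j\alpha)$ for $n\ge 1$ and $(t|\alpha)_0=1$. For parameters $\alpha,\beta,\gamma$, the generalised Stirling numbers $S(n,k,\alpha,\beta,\gamma)$ ($0\le k\le n$) are defined by the polynomial identity $(t|\alpha)_n=\sum_{k=0}^{n}S(n,k,\alpha,\beta,\gamma)\,(t-\gamma|\beta)_k$ in the variable $t$. The generalised exponential polynomials are $S_n(y;\alpha,\beta,r)=\sum_{k=0}^{n}S(n,k,\alpha,\beta,r)\,y^k$. For a nonnegative integer $\lambda$ put $\binom{k+\lambda-1}{k}=\lambda(\lambda+1)\cdots(\lambda+k-1)/k!$ (equal to $1$ for $k=0$). Define $$A^{\lambda,x}_n(\alpha,\beta,\gamma)=\sum_{k=0}^{n}\binom{k+\lambda-1}{k}(-1)^{n+k}\beta^k k!\,S(n,k,\alpha,-\beta,-\gamma)\,x^k .$$ *)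

From HB Require Import structures.
From mathcomp Require Import all_boot all_order all_algebra.
From mathcomp Require Import all_classical all_reals all_analysis.
From Stdlib Require Import ClassicalEpsilon.
Set Implicit Arguments. Unset Strict Implicit. Unset Printing Implicit Defensive.
Import Order.TTheory GRing.Theory Num.Theory.
Import numFieldNormedType.Exports.
Local Open Scope classical_set_scope.
Local Open Scope ring_scope.

Section Defs.
Variable R : realType.

Definition gfact (t a : R) (n : nat) : R := \prod_(j < n) (t - j%:R * a).

(* generalised Stirling numbers S(n,k,a,b,c): the (unique) coefficients with
   (t|a)_n = sum_{k=0}^n S(n,k,a,b,c) (t-c|b)_k for all t (polynomial identity
   over the infinite field R). *)
Definition gStirling_spec (a b c : R) (S : nat -> nat -> R) : Prop :=
  forall (n : nat) (t : R),
    gfact t a n = \sum_(k < n.+1) S n k * gfact (t - c) b k.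

Definition gStirling (a b c : R) : nat -> nat -> R :=
  epsilon (inhabits (fun _ _ => 0)) (gStirling_spec a b c).

Definition gexpPoly (n : nat) (y a b r : R) : R :=
  \sum_(k < n.+1) gStirling a b r n k * y ^+ k.

(* binom(k + lam - 1, k) = lam (lam+1) ... (lam+k-1) / k! *)
Definition binomL (lam k : nat) : R :=
  (\prod_(i < k) (lam + i)%:R) / (k`!)%:R.

Definition Apoly (lam : nat) (x : R) (n : nat) (a b c : R) : R :=
  \sum_(k < n.+1) binomL lam k * (-1) ^+ (n + k) * b ^+ k * (k`!)%:R
      * gStirling a (- b) (- c) n k * x ^+ k.

Definition Gamma (s : R) : R :=
  \int[lebesgue_measure]_(z in `[0, +oo[) (z `^ (s - 1) * expR (- z)).

End Defs.

From HB Require Import structures.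
From mathcomp Require Import all_boot all_order all_algebra.
From mathcomp Require Import all_classical all_reals all_analysis.
From mathcomp Require Import ring measurable_realfun.
Import Order.TTheory GRing.Theory Num.Theory.
Import numFieldNormedType.Exports.
Local Open Scope classical_set_scope.
Local Open Scope ring_scope.

(* Expanding S_n(-beta x z) in powers of z turns the integral into a finite
   combination of the moments int_0^oo z^m e^(-z) dz = m!, which follow from
   the antiderivative F_(m+1) = - z^(m+1) e^(-z) + (m+1) F_m, F_0 = - e^(-z)
   (integration by parts).  In particular Gamma(lam) = (lam-1)!, and the
   coefficients match because binom(k+lam-1, k) k! (lam-1)! = (lam-1+k)!. *)

Section Rintegral_sum.
Context d (T : measurableType d) (R : realType).
Variables (mu : {measure set T -> \bar R}) (D : set T) (mD : measurable D).

Lemma Rintegral_sum (I : Type) (s : seq I) (f : I -> T -> R) :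
  (forall i, mu.-integrable D (EFin \o f i)) ->
  \int[mu]_(x in D) (\sum_(i <- s) f i x) = \sum_(i <- s) \int[mu]_(x in D) f i x.
Proof.
move=> intf; elim: s => [|i s IH].
  under eq_Rintegral do rewrite big_nil.
  by rewrite /Rintegral integral0 big_nil.
under eq_Rintegral do rewrite big_cons.
rewrite RintegralD ?IH ?big_cons //.
apply: (eq_integrable mD (fun x => \sum_(j <- s) (f j x)%:E)%E).
  by move=> x _; rewrite /= sumEFin.
by apply: (integrable_sum mD) => j _; exact: intf.
Qed.

End Rintegral_sum.

Section gamma_moments.
Variable R : realType.
Local Notation mu := (@lebesgue_measure R).

Definition gamma_integrand (m : nat) (z : R) := z ^+ m * expR (- z).

Fixpoint gamma_primitive (m : nat) (z : R) : R :=
  match m with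
  | 0 => - expR (- z)
  | k.+1 => - gamma_integrand k.+1 z + k.+1%:R * gamma_primitive k z
  end.

Lemma is_derive_expRN (z : R) :
  is_derive z 1 (fun z => expR (- z)) (- expR (- z)).
Proof.
have := is_derive1_comp (is_derive_expR (- z)) (is_deriveNid z 1).
by rewrite mulrN1.
Qed.

Lemma is_derive_gamma_integrand m (z : R) : is_derive z 1 (gamma_integrand m)
  (m%:R * z ^+ m.-1 * expR (- z) - z ^+ m * expR (- z)).
Proof.
have -> : gamma_integrand m = (@id R ^+ m) * (fun z => expR (- z)).
  by apply/funext => y; rewrite !fctE.
apply: is_derive_eq (is_deriveM (is_deriveX m (is_derive_id z 1))
  (is_derive_expRN z)) _.
rewrite !fctE /GRing.scale /=; ring.
Qed.

Lemma is_derive_gamma_primitive m (z : R) :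
  is_derive z 1 (gamma_primitive m) (gamma_integrand m z).
Proof.
elim: m => [|k IH].
  have -> : gamma_primitive 0 = - (fun z => expR (- z)).
    by apply/funext => y; rewrite fctE.
  apply: is_derive_eq (is_deriveN (is_derive_expRN z)) _.
  by rewrite /gamma_integrand expr0 mul1r opprK.
have -> : gamma_primitive k.+1 =
    - gamma_integrand k.+1 + k.+1%:R *: gamma_primitive k.
  by apply/funext => y; rewrite !fctE.
apply: is_derive_eq (is_deriveD (is_deriveN (is_derive_gamma_integrand _ z))
  (is_deriveZ k.+1%:R IH)) _.
rewrite /gamma_integrand /GRing.scale /=; ring.
Qed.

Lemma continuous_gamma_integrand m : continuous (gamma_integrand m).
Proof.
move=> z; apply/differentiable_continuous/derivable1_diffP.
by case: (is_derive_gamma_integrand m z).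
Qed.

Lemma continuous_gamma_primitive m : continuous (gamma_primitive m).
Proof.
move=> z; apply/differentiable_continuous/derivable1_diffP.
by case: (is_derive_gamma_primitive m z).
Qed.

Lemma gamma_primitive0 m : gamma_primitive m 0 = - m`!%:R.
Proof.
elim: m => [|k IH] /=; first by rewrite oppr0 expR0.
by rewrite IH /gamma_integrand expr0n mul0r oppr0 add0r factS natrM mulrN.
Qed.

Lemma gamma_integrand_ge0 m z : 0 <= z -> 0 <= gamma_integrand m z.
Proof. by move=> z0; rewrite mulr_ge0 ?exprn_ge0 ?expR_ge0. Qed.

Lemma cvgy_invr : (x : R)^-1 @[x --> +oo] --> 0.
Proof.
have pos : \forall x \near +oo, 0 < (id : R -> R) x by near=> x.
exact: (gtr0_cvgV0 pos).2 cvg_id.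
Unshelve. all: by end_near. Qed.

Lemma cvgy_gamma_integrand m : gamma_integrand m x @[x --> +oo] --> 0.
Proof.
(* expR x >= x^(m+1) / (m+1)! bounds x^m e^(-x) by (m+1)! / x *)
apply: (@squeeze_cvgr _ _ _ _ (cst 0) (fun x => m.+1`!%:R * x^-1)); last 2 first.
- exact: cvg_cst.
- rewrite -(mulr0 m.+1`!%:R); apply: cvgM; [exact: cvg_cst | exact: cvgy_invr].
near=> x; have x0 : 0 < x by [].
apply/andP; split; first exact/gamma_integrand_ge0/ltW.
have fact0 : 0 < m.+1`!%:R :> R by rewrite ltr0n fact_gt0.
have exp_ge : x ^+ m.+1 / m.+1`!%:R <= expR x.
  by apply: le_trans (expR_ge1Dxn m (ltW x0)); rewrite lerDr.
rewrite /gamma_integrand expRN ler_pdivlMr // mulrAC -exprSr.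
by rewrite ler_pdivrMr ?expR_gt0 // mulrC -ler_pdivrMr.
Unshelve. all: by end_near. Qed.

Lemma cvgy_gamma_primitive m : gamma_primitive m x @[x --> +oo] --> 0.
Proof.
elim: m => [|k IH] /=; first by rewrite -oppr0; apply: cvgN; exact: cvgr_expR.
rewrite -[0]addr0; apply: cvgD.
  by rewrite -oppr0; apply: cvgN; exact: cvgy_gamma_integrand.
by rewrite -(mulr0 k.+1%:R); apply: cvgM => //; exact: cvg_cst.
Qed.

Lemma integral_gamma_integrand m :
  (\int[mu]_(x in `[0%R, +oo[) (gamma_integrand m x)%:E = m`!%:R%:E)%E.
Proof.
rewrite (@ge0_continuous_FTC2y R _ (gamma_primitive m) 0 0).
- by rewrite gamma_primitive0 -EFinB sub0r opprK.
- by move=> x; exact: gamma_integrand_ge0.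
- exact/continuous_subspaceT/continuous_gamma_integrand.
- exact: cvgy_gamma_primitive.
- by move=> x _; case: (is_derive_gamma_primitive m x).
- exact/cvg_at_right_filter/continuous_gamma_primitive.
- move=> x _; rewrite derive1E.
  exact: (@derive_val _ _ _ _ _ _ _ (is_derive_gamma_primitive m x)).
Qed.

Lemma integrable_gamma_integrand m :
  mu.-integrable `[0, +oo[ (EFin \o gamma_integrand m).
Proof.
apply/integrableP; split.
  apply/measurable_EFinP; apply: measurable_funTS.
  apply: continuous_measurable_fun; exact: continuous_gamma_integrand.
under eq_integral => x.
  rewrite inE /= in_itv /= andbT => x0.
  rewrite /= ger0_norm ?gamma_integrand_ge0 //.
  over.
by rewrite integral_gamma_integrand ltry.
Qed.

Lemma Rintegral_gamma_integrand m :
  \int[mu]_(x in `[0, +oo[) gamma_integrand m x = m`!%:R.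
Proof. by rewrite /Rintegral integral_gamma_integrand. Qed.

Lemma Gamma_nat m : Gamma m.+1%:R = m`!%:R :> R.
Proof.
rewrite /Gamma -(Rintegral_gamma_integrand m); apply: eq_Rintegral => z.
rewrite inE /= in_itv /= andbT => z0.
by rewrite -natr1 addrK powR_mulrn.
Qed.

Lemma Rintegral_poly_gamma l n (c : nat -> R) (a : R) :
  \int[mu]_(z in `[0, +oo[)
     (z ^+ l * (\sum_(k < n) c k * (a * z) ^+ k) * expR (- z)) =
  \sum_(k < n) c k * a ^+ k * (l + k)`!%:R.
Proof.
under eq_Rintegral => z _.
  rewrite mulr_sumr mulr_suml.
  under eq_bigr => k _.
    rewrite (_ : _ * _ = c k * a ^+ k * gamma_integrand (l + k) z); last first.
      by rewrite /gamma_integrand exprD exprMn; ring.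
    over.
  over.
have mD : measurable (`[0%R, +oo[ : set (measurableTypeR R)).
  exact: measurable_itv.
have int_k (k : 'I_n) : mu.-integrable `[0%R, +oo[
    (EFin \o (fun z => c k * a ^+ k * gamma_integrand (l + k) z)).
  apply: (eq_integrable mD
    (fun z => (c k * a ^+ k)%:E * (gamma_integrand (l + k) z)%:E)%E).
    by move=> z _; rewrite /= EFinM.
  exact/(integrableZl mD)/integrable_gamma_integrand.
rewrite Rintegral_sum //; apply: eq_bigr => k _.
by rewrite RintegralZl ?Rintegral_gamma_integrand //; exact: integrable_gamma_integrand.
Qed.

End gamma_moments.

Lemma fact_mul_rising l k : (l`! * \prod_(i < k) (l.+1 + i) = (l + k)`!)%N.
Proof.
elim: k => [|k IH]; first by rewrite addn0 big_ord0 muln1.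
by rewrite big_ord_recr /= mulnA IH addnS factS mulnC -addSn.
Qed.

Lemma binomL_fact (R : realType) (l k : nat) :
  binomL R l.+1 k * k`!%:R * l`!%:R = (l + k)`!%:R :> R.
Proof.
have k0 : k`!%:R != 0 :> R by rewrite pnatr_eq0 -lt0n fact_gt0.
by rewrite /binomL divfK // -fact_mul_rising natrM natr_prod mulrC.
Qed.

Theorem lemma3 (R : realType) (alpha beta r x : R) (lam : nat) (hlam : (0 < lam)%N)
  (n : nat) :
  Apoly lam x n alpha beta r =
  (-1) ^+ n / Gamma lam%:R *
  \int[lebesgue_measure]_(z in `[0, +oo[)
     (z ^+ (lam - 1) * gexpPoly n (- beta * x * z) alpha (- beta) (- r) * expR (- z)).
Proof.
have [l ->] : exists l, lam = l.+1 by exists lam.-1; rewrite prednK.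
rewrite subSS subn0 Gamma_nat /gexpPoly Rintegral_poly_gamma.
rewrite /Apoly mulr_sumr; apply: eq_bigr => k _.
rewrite -binomL_fact exprD -[- beta]mulN1r !exprMn.
have l0 : l`!%:R != 0 :> R by rewrite pnatr_eq0 -lt0n fact_gt0.
by field.
Qed.
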